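(* For any $\lambda>0$ and $\alpha\in(0,1)$, $$\sum_{k=1}^{\infty}\frac{\lambda^{\alpha k-1}k^{1-\alpha}}{((k-1)!)^{\alpha}}\ge\sum_{k=0}^{\infty}\frac{\lambda^{\alpha k}}{(k!)^{\alpha}},$$ while for any $\lambda>0$ and $\alpha>1$, $$\sum_{k=1}^{\infty}\frac{\lambda^{\alpha k-1}k^{1-\alpha}}{((k-1)!)^{\alpha}}\le\sum_{k=0}^{\infty}\frac{\lambda^{\alpha k}}{(k!)^{\alpha}}.$$ *)

From Stdlib Require Import Reals.
From Coquelicot Require Import Coquelicot.
Open Scope R_scope.

(* Term of the left series, re-indexed: lhs_term n is the k = n+1 term
   lambda^(alpha k - 1) * k^(1-alpha) / ((k-1)!)^alpha. *)
Definition lhs_term (lam alpha : R) (n : nat) : R :=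
  Rpower lam (alpha * INR (S n) - 1) * Rpower (INR (S n)) (1 - alpha)
  / Rpower (INR (Factorial.fact n)) alpha.

Definition rhs_term (lam alpha : R) (k : nat) : R :=
  Rpower lam (alpha * INR k) / Rpower (INR (Factorial.fact k)) alpha.

(* Write r_k = lambda^(alpha k) / (k!)^alpha and x_k = k / lambda.  The k-th left
   term is r_k x_k, while r_(k-1) = r_k x_k^alpha.  The tangent line alpha x + 1 - alpha
   of x^alpha at x = 1 lies above the graph for alpha <= 1 and below it for alpha >= 1,
   so r_(k-1) <= alpha (r_k x_k) + (1 - alpha) r_k when alpha < 1, reversed when
   alpha > 1.  All series converge by the ratio test; summing over k >= 1 gives
   R <= alpha L + (1 - alpha) (R - r_0), hence alpha R <= alpha L - (1 - alpha) r_0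
   <= alpha L, and symmetrically for alpha > 1. *)

From Stdlib Require Import Reals Lra.
From Coquelicot Require Import Coquelicot.
Open Scope R_scope.

Lemma exp_mul_le_convex (a t : R) : 0 <= a <= 1 ->
  exp (a * t) <= a * exp t + (1 - a).
Proof.
  intros Ha.
  (* Average the tangent bounds of [exp] at [a * t], taken at [t] and [0]. *)
  assert (tangent : forall s, exp (a * t) * (1 + (s - a * t)) <= exp s).
  { intros s. replace (exp s) with (exp (a * t) * exp (s - a * t)).
    - apply Rmult_le_compat_l; [apply Rlt_le, exp_pos | apply exp_ineq1_le].
    - rewrite <- exp_plus. f_equal. ring. }
  pose proof (tangent t) as at_t. pose proof (tangent 0) as at_0.
  rewrite exp_0 in at_0. nra.
Qed.

Lemma Rpower_le_tangent_1 (x a : R) : 0 < x -> 0 <= a <= 1 ->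
  Rpower x a <= a * x + (1 - a).
Proof.
  intros Hx Ha. pose proof (exp_mul_le_convex a (ln x) Ha) as H.
  rewrite exp_ln in H by exact Hx. exact H.
Qed.

Lemma Rpower_ge_tangent_1 (x a : R) : 0 < x -> 1 <= a ->
  a * x + (1 - a) <= Rpower x a.
Proof.
  intros Hx Ha.
  assert (Hy : 0 < Rpower x a) by apply exp_pos.
  assert (Hinv : 0 <= / a <= 1).
  { split; [apply Rlt_le, Rinv_0_lt_compat; lra |].
    rewrite <- Rinv_1. apply Rinv_le_contravar; lra. }
  pose proof (Rpower_le_tangent_1 (Rpower x a) (/ a) Hy Hinv) as H.
  rewrite Rpower_mult, Rinv_r, Rpower_1 in H by lra.
  apply (Rmult_le_compat_l a) in H; [| lra].
  replace (a * (/ a * Rpower x a + (1 - / a))) with (Rpower x a + a - 1) in H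
    by (field; lra).
  lra.
Qed.

Lemma is_lim_seq_Rpower_p_infty (u : nat -> R) (a : R) : 0 < a ->
  is_lim_seq u p_infty -> is_lim_seq (fun n => Rpower (u n) a) p_infty.
Proof.
  intros Ha Hu. unfold Rpower.
  apply (is_lim_comp_seq exp _ p_infty); [exact is_lim_exp_p | now exists O |].
  assert (Hln : is_lim_seq (fun n => ln (u n)) p_infty).
  { apply (is_lim_comp_seq ln _ p_infty); [exact is_lim_ln_p | now exists O | exact Hu]. }
  apply (is_lim_seq_ext (fun n => ln (u n) * a)); [intros n; apply Rmult_comm |].
  apply (is_lim_seq_mult _ _ p_infty a); [exact Hln | apply is_lim_seq_const |].
  apply is_Rbar_mult_p_infty_pos. exact Ha.
Qed.

Lemma is_lim_seq_INR_S_div (c : R) : 0 < c ->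
  is_lim_seq (fun n => INR (S n) / c) p_infty.
Proof.
  intros Hc. apply (is_lim_seq_mult _ _ p_infty (/ c)).
  - apply (is_lim_seq_incr_1 INR), is_lim_seq_INR.
  - apply is_lim_seq_const.
  - apply is_Rbar_mult_p_infty_pos. simpl. apply Rinv_0_lt_compat, Hc.
Qed.

Lemma is_lim_seq_INR_succ_ratio : is_lim_seq (fun n => INR (S (S n)) / INR (S n)) 1.
Proof.
  apply (is_lim_seq_ext (fun n => 1 + / INR (S n))).
  - intros n. pose proof (lt_0_INR (S n) (Nat.lt_0_succ n)).
    rewrite (S_INR (S n)). field. lra.
  - assert (Hinv : is_lim_seq (fun n => / INR (S n)) 0).
    { apply (is_lim_seq_inv _ p_infty); [| discriminate].
      apply (is_lim_seq_incr_1 INR), is_lim_seq_INR. }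
    pose proof (is_lim_seq_plus' _ _ 1 0 (is_lim_seq_const 1) Hinv) as H.
    rewrite Rplus_0_r in H. exact H.
Qed.

Lemma ex_series_ratio_lim_0 (u : nat -> R) :
  (forall n, 0 < u n) -> is_lim_seq (fun n => u (S n) / u n) 0 -> ex_series u.
Proof.
  intros Hpos Hlim. apply ex_series_Rabs.
  apply (ex_series_DAlembert u 0); [lra | intros n; apply Rgt_not_eq, Hpos |].
  apply (is_lim_seq_ext (fun n => u (S n) / u n)); [| exact Hlim].
  intros n. symmetry. apply Rabs_pos_eq, Rlt_le, Rdiv_lt_0_compat; apply Hpos.
Qed.

Lemma is_series_le (u v : nat -> R) (U V : R) :
  (forall n, u n <= v n) -> is_series u U -> is_series v V -> U <= V.
Proof.
  intros Huv HU HV. apply (is_lim_seq_le (sum_n u) (sum_n v) U V); [| exact HU | exact HV].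
  intros n. rewrite !sum_n_Reals. apply sum_Rle. intros k _. apply Huv.
Qed.

Lemma is_series_affine_shift (u v : nat -> R) (a U V : R) :
  is_series u U -> is_series v V ->
  is_series (fun n => a * u n + (1 - a) * v (S n)) (a * U + (1 - a) * (V - v O)).
Proof.
  intros HU HV.
  assert (HVS : is_series (fun n => v (S n)) (V - v O)).
  { apply is_series_incr_1. unfold plus; simpl.
    replace (V - v O + v O) with V by ring. exact HV. }
  exact (is_series_plus _ _ _ _ (is_series_scal_l a _ _ HU) (is_series_scal_l (1 - a) _ _ HVS)).
Qed.

Lemma rhs_term_pos (lam a : R) (n : nat) : 0 < rhs_term lam a n.
Proof. apply Rdiv_lt_0_compat; apply exp_pos. Qed.

Lemma lhs_term_pos (lam a : R) (n : nat) : 0 < lhs_term lam a n.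
Proof. apply Rdiv_lt_0_compat; [apply Rmult_lt_0_compat |]; apply exp_pos. Qed.

Lemma INR_S_div_pos (lam : R) (n : nat) : 0 < lam -> 0 < INR (S n) / lam.
Proof.
  intros Hlam. apply Rdiv_lt_0_compat; [apply lt_0_INR, Nat.lt_0_succ | exact Hlam].
Qed.

Lemma rhs_term_eq_succ (lam a : R) (n : nat) : 0 < lam ->
  rhs_term lam a n = rhs_term lam a (S n) * Rpower (INR (S n) / lam) a.
Proof.
  intros Hlam. pose proof (lt_0_INR (S n) (Nat.lt_0_succ n)).
  pose proof (INR_fact_lt_0 n).
  unfold rhs_term, Rpower.
  rewrite fact_simpl, mult_INR, ln_mult, ln_div by assumption.
  unfold Rdiv. rewrite <- !exp_Ropp, <- !exp_plus. f_equal.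
  rewrite S_INR. ring.
Qed.

Lemma lhs_term_eq_rhs_succ (lam a : R) (n : nat) : 0 < lam ->
  lhs_term lam a n = rhs_term lam a (S n) * (INR (S n) / lam).
Proof.
  intros Hlam. pose proof (lt_0_INR (S n) (Nat.lt_0_succ n)).
  pose proof (INR_fact_lt_0 n).
  unfold lhs_term, rhs_term, Rpower.
  rewrite <- (exp_ln (INR (S n) / lam)) by (apply INR_S_div_pos, Hlam).
  rewrite fact_simpl, mult_INR, ln_mult, ln_div by assumption.
  unfold Rdiv. rewrite <- !exp_Ropp, <- !exp_plus. f_equal. ring.
Qed.

Lemma rhs_term_ratio_lim (lam a : R) : 0 < lam -> 0 < a ->
  is_lim_seq (fun n => rhs_term lam a (S n) / rhs_term lam a n) 0.
Proof.
  intros Hlam Ha.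
  apply (is_lim_seq_ext (fun n => / Rpower (INR (S n) / lam) a)).
  - intros n. rewrite (rhs_term_eq_succ lam a n Hlam).
    pose proof (rhs_term_pos lam a (S n)). pose proof (exp_pos (a * ln (INR (S n) / lam))).
    unfold Rpower. field. lra.
  - apply (is_lim_seq_inv _ p_infty); [| discriminate].
    apply is_lim_seq_Rpower_p_infty, is_lim_seq_INR_S_div; assumption.
Qed.

Lemma lhs_term_ratio_lim (lam a : R) : 0 < lam -> 0 < a ->
  is_lim_seq (fun n => lhs_term lam a (S n) / lhs_term lam a n) 0.
Proof.
  intros Hlam Ha.
  apply (is_lim_seq_ext (fun n => rhs_term lam a (S (S n)) / rhs_term lam a (S n)
                                   * (INR (S (S n)) / INR (S n)))).
  - intros n. rewrite !(lhs_term_eq_rhs_succ lam a _ Hlam).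
    pose proof (rhs_term_pos lam a (S n)). pose proof (lt_0_INR (S n) (Nat.lt_0_succ n)).
    field. lra.
  - replace 0 with (0 * 1) by ring.
    apply is_lim_seq_mult'; [| exact is_lim_seq_INR_succ_ratio].
    apply (is_lim_seq_incr_1 (fun n => rhs_term lam a (S n) / rhs_term lam a n)).
    apply rhs_term_ratio_lim; assumption.
Qed.

Lemma ex_series_rhs_term (lam a : R) : 0 < lam -> 0 < a -> ex_series (rhs_term lam a).
Proof.
  intros Hlam Ha. apply ex_series_ratio_lim_0; [apply rhs_term_pos |].
  apply rhs_term_ratio_lim; assumption.
Qed.

Lemma ex_series_lhs_term (lam a : R) : 0 < lam -> 0 < a -> ex_series (lhs_term lam a).
Proof.
  intros Hlam Ha. apply ex_series_ratio_lim_0; [apply lhs_term_pos |].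
  apply lhs_term_ratio_lim; assumption.
Qed.

Definition mix_term (lam a : R) (n : nat) : R :=
  a * lhs_term lam a n + (1 - a) * rhs_term lam a (S n).

Lemma mix_term_eq_rhs_succ (lam a : R) (n : nat) : 0 < lam ->
  mix_term lam a n = rhs_term lam a (S n) * (a * (INR (S n) / lam) + (1 - a)).
Proof.
  intros Hlam. unfold mix_term. rewrite (lhs_term_eq_rhs_succ lam a n Hlam). ring.
Qed.

Lemma rhs_term_le_mix_term (lam a : R) (n : nat) : 0 < lam -> 0 <= a <= 1 ->
  rhs_term lam a n <= mix_term lam a n.
Proof.
  intros Hlam Ha. rewrite (rhs_term_eq_succ lam a n Hlam), (mix_term_eq_rhs_succ lam a n Hlam).
  apply Rmult_le_compat_l; [apply Rlt_le, rhs_term_pos |].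
  apply Rpower_le_tangent_1; [apply INR_S_div_pos |]; assumption.
Qed.

Lemma mix_term_le_rhs_term (lam a : R) (n : nat) : 0 < lam -> 1 <= a ->
  mix_term lam a n <= rhs_term lam a n.
Proof.
  intros Hlam Ha. rewrite (rhs_term_eq_succ lam a n Hlam), (mix_term_eq_rhs_succ lam a n Hlam).
  apply Rmult_le_compat_l; [apply Rlt_le, rhs_term_pos |].
  apply Rpower_ge_tangent_1; [apply INR_S_div_pos |]; assumption.
Qed.

Lemma is_series_mix_term (lam a : R) : 0 < lam -> 0 < a ->
  is_series (mix_term lam a)
    (a * Series (lhs_term lam a) + (1 - a) * (Series (rhs_term lam a) - rhs_term lam a O)).
Proof.
  intros Hlam Ha. apply is_series_affine_shift; apply Series_correct;
    [apply ex_series_lhs_term | apply ex_series_rhs_term]; assumption.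
Qed.

Theorem lemma2 :
  (forall lam alpha : R, 0 < lam -> 0 < alpha < 1 ->
     exists S1 S2 : R,
       is_series (lhs_term lam alpha) S1 /\ is_series (rhs_term lam alpha) S2 /\
       S1 >= S2) /\
  (forall lam alpha : R, 0 < lam -> 1 < alpha ->
     exists S1 S2 : R,
       is_series (lhs_term lam alpha) S1 /\ is_series (rhs_term lam alpha) S2 /\
       S1 <= S2).
Proof.
  split; intros lam a Hlam Ha;
    pose proof (Series_correct _ (ex_series_lhs_term lam a Hlam ltac:(lra))) as HL;
    pose proof (Series_correct _ (ex_series_rhs_term lam a Hlam ltac:(lra))) as HR;
    pose proof (is_series_mix_term lam a Hlam ltac:(lra)) as HM;
    pose proof (rhs_term_pos lam a O);
    exists (Series (lhs_term lam a)), (Series (rhs_term lam a));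
    repeat split; try assumption.
  - pose proof (is_series_le _ _ _ _
      (fun n => rhs_term_le_mix_term lam a n Hlam ltac:(lra)) HR HM).
    nra.
  - pose proof (is_series_le _ _ _ _
      (fun n => mix_term_le_rhs_term lam a n Hlam ltac:(lra)) HM HR).
    nra.
Qed.
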